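(* Let $c:[\omega_2]^2\to\omega$, let $k\in\omega$, and let $A\in[\omega_1]^{\aleph_1}$ and $B\in[\omega_2\setminus\omega_1]^{\aleph_1}$ satisfy: (1) for any $\alpha_0,\alpha_1\in A$ there are uncountably many $\beta\in B$ with $c(\alpha_0,\beta)=k=c(\alpha_1,\beta)$; and (2) for any $\beta_0\in B$ there are uncountably many $\alpha\in A$ with $c(\alpha,\beta_0)=k$. Then $(A\cup B, c^{-1}(k)\cap[A\cup B]^2)$ is highly connected.
   Context: A graph $G=(X,E)$ is highly connected if for every $Y\subseteq X$ with $|Y|<|X|$, the induced subgraph $(X\setminus Y,E\cap[X\setminus Y]^2)$ is connected. *)

From Stdlib Require Import Relations Relation_Operators Wellfounded.

Definition injects {A B : Type} (P : A -> Prop) (Q : B -> Prop) : Prop :=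
  exists f : A -> B,
    (forall x, P x -> Q (f x)) /\
    (forall x y, P x -> P y -> f x = f y -> x = y).

Definition equipotent {A B : Type} (P : A -> Prop) (Q : B -> Prop) : Prop :=
  injects P Q /\ injects Q P.

Definition card_lt {A B : Type} (P : A -> Prop) (Q : B -> Prop) : Prop :=
  injects P Q /\ ~ injects Q P.

Definition countable {A : Type} (P : A -> Prop) : Prop :=
  injects P (fun _ : nat => True).

Definition strict_wellorder {T : Type} (lt : T -> T -> Prop) : Prop :=
  (forall x, ~ lt x x) /\
  (forall x y z, lt x y -> lt y z -> lt x z) /\
  (forall x y, lt x y \/ x = y \/ lt y x) /\
  well_founded lt.

(* Inside a well-order (T, lt): the initial segment of elements with
   countably many predecessors.  When (T, lt) is ω2 this is exactly ω1. *)
Definition omega1_part {T : Type} (lt : T -> T -> Prop) (x : T) : Prop :=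
  countable (fun y => lt y x).

(* (T, lt) is (order-isomorphic to) the ordinal ω2: a well-order whose
   countable-predecessor part (= ω1) is such that every proper initial
   segment has size <= |ω1|, while T itself has size > |ω1|. *)
Definition is_omega2 {T : Type} (lt : T -> T -> Prop) : Prop :=
  strict_wellorder lt /\
  (forall a : T, injects (fun x => lt x a) (omega1_part lt)) /\
  ~ injects (fun _ : T => True) (omega1_part lt).

(* Connectedness of the graph with vertex set V and edge relation E
   (Diestel's convention: nonempty, and any two vertices are joined by a path). *)
Definition connected_graph {T : Type} (V : T -> Prop) (E : T -> T -> Prop) : Prop :=
  (exists v, V v) /\
  forall u v, V u -> V v ->
    clos_refl_trans T (fun x y => V x /\ V y /\ E x y) u v.

Definition highly_connected {T : Type} (X : T -> Prop) (E : T -> T -> Prop) : Prop :=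
  forall Y : T -> Prop,
    (forall y, Y y -> X y) -> card_lt Y X ->
    connected_graph (fun x => X x /\ ~ Y x) E.

From Stdlib Require Import Classical ClassicalEpsilon FunctionalExtensionality.
From Stdlib Require Import Relation_Operators Lia.

(* Let Y be a subset of A ∪ B with |Y| < |A ∪ B|, and V = (A ∪ B) \ Y.
   The cardinal heart of the argument: Y cannot contain an uncountable set S.
   Indeed, by transfinite recursion along ω1 (every element of which has
   countably many predecessors) one picks, for each α < ω1, two fresh
   elements of S, giving an injection of 2 × ω1 into S; since A and B both
   have size ℵ1, A ∪ B injects into 2 × ω1, hence into S ⊆ Y — contradicting
   |Y| < |A ∪ B|.  So every uncountable set meets V.
   Connectivity is then a purely graph-theoretic fact: V is connected as soon
   as every vertex of V is in, or adjacent to, a "hub" vertex of V ∩ A, and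
   any two hubs have a common neighbour in V.  Hypothesis (2) gives the first
   property, hypothesis (1) the second, each time by choosing the required
   neighbour among uncountably many candidates, one of which avoids Y. *)

Lemma countable_sub {U : Type} (P Q : U -> Prop) :
  countable P -> (forall x, Q x -> P x) -> countable Q.
Proof.
  intros [h [_ Hinj]] HQP. exists h. split; auto.
Qed.

Lemma countable_union {U : Type} (P Q : U -> Prop) :
  countable P -> countable Q -> countable (fun x => P x \/ Q x).
Proof.
  intros [hP [_ HP]] [hQ [_ HQ]].
  exists (fun x => if excluded_middle_informative (P x) then 2 * hP x
                   else S (2 * hQ x)).
  split; [auto|]. intros x y Hx Hy.
  destruct (excluded_middle_informative (P x));
    destruct (excluded_middle_informative (P y)); intro Heq.
  - apply HP; auto; lia.
  - lia.
  - lia.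
  - apply HQ; [tauto | tauto | lia].
Qed.

Lemma countable_image {U V : Type} (P : U -> Prop) (g : U -> V) :
  countable P -> countable (fun z => exists y, P y /\ z = g y).
Proof.
  intros [h [_ Hinj]].
  (* Send z to the code of a chosen preimage. *)
  exists (fun z => match excluded_middle_informative (exists y, P y /\ z = g y) with
                   | left e => h (proj1_sig (constructive_indefinite_description _ e))
                   | right _ => 0 end).
  split; [auto|]. intros z1 z2 Hz1 Hz2.
  destruct (excluded_middle_informative (exists y, P y /\ z1 = g y)) as [e1|]; [|contradiction].
  destruct (excluded_middle_informative (exists y, P y /\ z2 = g y)) as [e2|]; [|contradiction].
  destruct (constructive_indefinite_description _ e1) as [y1 [Py1 ->]].
  destruct (constructive_indefinite_description _ e2) as [y2 [Py2 ->]].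
  simpl. intro Heq. now rewrite (Hinj y1 y2 Py1 Py2 Heq).
Qed.

Lemma countable_singleton {U : Type} (s : U) : countable (fun z => z = s).
Proof.
  exists (fun _ => 0). split; [auto|]. intros x y -> -> _. reflexivity.
Qed.

Lemma uncountable_avoid {U : Type} (S C : U -> Prop) :
  ~ countable S -> countable C -> exists s, S s /\ ~ C s.
Proof.
  intros HS HC. apply NNPP. intro Hno. apply HS.
  apply (countable_sub C _ HC). intros z Sz. apply NNPP. intro. apply Hno; eauto.
Qed.

Lemma fresh_pair {U : Type} (S C : U -> Prop) :
  ~ countable S -> countable C ->
  exists s1 s2, S s1 /\ S s2 /\ s1 <> s2 /\ ~ C s1 /\ ~ C s2.
Proof.
  intros HS HC.
  destruct (uncountable_avoid S C HS HC) as [s1 [S1 C1]].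
  destruct (uncountable_avoid S (fun z => C z \/ z = s1) HS
              (countable_union _ _ HC (countable_singleton s1))) as [s2 [S2 C2]].
  exists s1, s2. intuition.
Qed.

Lemma injects_trans {U V W : Type} (P : U -> Prop) (Q : V -> Prop) (R : W -> Prop) :
  injects P Q -> injects Q R -> injects P R.
Proof.
  intros [f [Hf If]] [g [Hg Ig]]. exists (fun x => g (f x)). split; auto.
Qed.

Lemma injects_mono_r {U V : Type} (P : U -> Prop) (Q R : V -> Prop) :
  injects P Q -> (forall y, Q y -> R y) -> injects P R.
Proof.
  intros [f [Hf If]] HQR. exists f. split; auto.
Qed.

Lemma union_injects_double {U V : Type} (A B : U -> Prop) (Om : V -> Prop) :
  injects A Om -> injects B Om ->
  injects (fun z => A z \/ B z) (fun p : bool * V => Om (snd p)).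
Proof.
  intros [ga [HgaOm Hga]] [gb [HgbOm Hgb]].
  exists (fun z => if excluded_middle_informative (A z) then (true, ga z)
                   else (false, gb z)).
  split.
  - intros z Hz. destruct (excluded_middle_informative (A z)); simpl; [auto|].
    apply HgbOm. tauto.
  - intros z1 z2 Hz1 Hz2.
    destruct (excluded_middle_informative (A z1));
      destruct (excluded_middle_informative (A z2)); intro Heq; inversion Heq.
    + auto.
    + apply Hgb; tauto.
Qed.

Lemma wf_recursive_choice {T X : Type} (lt : T -> T -> Prop)
  (Hwf : well_founded lt) (x0 : X) (R : T -> (T -> X) -> X -> Prop)
  (Hlocal : forall x g h p, (forall y, lt y x -> g y = h y) -> R x g p -> R x h p) :
  exists f : T -> X, forall x, (exists p, R x f p) -> R x f (f x).
Proof.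
  pose (extend := fun x (rec : forall y, lt y x -> X) (y : T) =>
          match excluded_middle_informative (lt y x) with
          | left h => rec y h
          | right _ => x0 end).
  pose (F := fun x rec => epsilon (inhabits x0) (R x (extend x rec))).
  pose (f := Fix Hwf (fun _ => X) F).
  exists f. intros x Hsat.
  assert (Hunfold : f x = F x (fun y _ => f y)).
  { apply (Fix_eq Hwf (fun _ => X) F).
    intros x' f1 f2 Heq.
    replace f2 with f1; [reflexivity|].
    extensionality y. extensionality h. apply Heq. }
  assert (Hagree : forall y, lt y x -> f y = extend x (fun y _ => f y) y).
  { intros y Hy. unfold extend.
    destruct (excluded_middle_informative (lt y x)); [reflexivity | contradiction]. }
  destruct Hsat as [p Hp].
  apply (Hlocal x (extend x (fun y _ => f y)));
    [intros y Hy; symmetry; apply Hagree; exact Hy|].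
  rewrite Hunfold. apply epsilon_spec. exists p. apply (Hlocal x f); auto.
Qed.

Definition pairs_disjoint {U : Type} (p q : U * U) : Prop :=
  fst p <> fst q /\ fst p <> snd q /\ snd p <> fst q /\ snd p <> snd q.

Lemma disjoint_pairs_inject {I U : Type} (Om : I -> Prop) (S : U -> Prop)
  (f : I -> U * U)
  (Hpair : forall x, Om x -> S (fst (f x)) /\ S (snd (f x)) /\ fst (f x) <> snd (f x))
  (Hsep : forall x y, Om x -> Om y -> x <> y -> pairs_disjoint (f x) (f y)) :
  injects (fun p : bool * I => Om (snd p)) S.
Proof.
  exists (fun p : bool * I => if fst p then fst (f (snd p)) else snd (f (snd p))).
  split.
  - intros [[|] x] Hx; simpl in *; apply (Hpair x Hx).
  - intros [b1 x1] [b2 x2] Hx1 Hx2; simpl in *.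
    destruct (classic (x1 = x2)) as [<-|Hne].
    + destruct (Hpair x1 Hx1) as [_ [_ Hd]].
      destruct b1, b2; intro Heq; congruence.
    + destruct (Hsep x1 x2 Hx1 Hx2 Hne) as [? [? [? ?]]].
      destruct b1, b2; intro Heq; congruence.
Qed.

(* For each x ∈ Om we recursively choose a pair of new
   elements of S, disjoint from all pairs chosen below x. *)
Lemma double_injects_uncountable {T : Type} (lt : T -> T -> Prop)
  (Hwf : well_founded lt) (Htri : forall x y, lt x y \/ x = y \/ lt y x)
  (Om : T -> Prop) (HOm : forall x, Om x -> countable (fun y => lt y x))
  (S : T -> Prop) (HS : ~ countable S) :
  injects (fun p : bool * T => Om (snd p)) S.
Proof.
  (* S is nonempty, which provides a default value for the recursion. *)
  assert (Hempty : countable (fun _ : T => False))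
    by (exists (fun _ => 0); split; intros; contradiction).
  destruct (uncountable_avoid S _ HS Hempty) as [d _].
  set (R := fun x (g : T -> T * T) (p : T * T) =>
         S (fst p) /\ S (snd p) /\ fst p <> snd p /\
         forall y, lt y x -> pairs_disjoint (g y) p).
  destruct (wf_recursive_choice lt Hwf (d, d) R) as [f Hf].
  { intros x g h p Hgh [HS1 [HS2 [Hne Hp]]].
    split; [|split; [|split]]; auto.
    intros y Hy. rewrite <- (Hgh y Hy). auto. }
  assert (Hpair : forall x, Om x -> R x f (f x)).
  { intros x Hx. apply Hf.
    (* The elements used below x form a countable set. *)
    set (C := fun z => (exists y, lt y x /\ z = fst (f y)) \/
                       (exists y, lt y x /\ z = snd (f y))).
    assert (HC : countable C) by
      (apply countable_union; apply countable_image; auto).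
    destruct (fresh_pair S C HS HC) as [s1 [s2 [S1 [S2 [Hne [C1 C2]]]]]].
    exists (s1, s2). unfold R, pairs_disjoint, C in *; simpl.
    repeat split; auto; intro; subst; eauto. }
  apply (disjoint_pairs_inject Om S f).
  - intros x Hx. destruct (Hpair x Hx) as [? [? [? _]]]. auto.
  - intros x y Hx Hy Hxy. destruct (Htri x y) as [Hl|[He|Hl]].
    + apply (Hpair y Hy). exact Hl.
    + contradiction.
    + destruct (proj2 (proj2 (proj2 (Hpair x Hx))) y Hl) as [? [? [? ?]]].
      repeat split; auto.
Qed.

(* In ω2, the part ω1 is uncountable: otherwise every element of T would
   have countably many predecessors, so T itself would inject into ω1. *)
Lemma omega1_part_uncountable {T : Type} (lt : T -> T -> Prop) :
  is_omega2 lt -> ~ countable (omega1_part lt).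
Proof.
  intros [_ [Hseg Hbig]] Hc. apply Hbig.
  exists (fun x => x). split; [|auto].
  intros x _. exact (injects_trans _ _ _ (Hseg x) Hc).
Qed.

Lemma small_set_misses_uncountable {T : Type} (lt : T -> T -> Prop)
  (Homega2 : is_omega2 lt) (A B Y S : T -> Prop)
  (HA : injects A (omega1_part lt)) (HB : injects B (omega1_part lt))
  (HY : ~ injects (fun z => A z \/ B z) Y) (HS : ~ countable S) :
  exists s, S s /\ ~ Y s.
Proof.
  destruct Homega2 as [[_ [_ [Htri Hwf]]] _].
  apply NNPP. intro Hno. apply HY.
  apply (injects_trans _ _ _ (union_injects_double A B _ HA HB)).
  apply (injects_mono_r _ S).
  - exact (double_injects_uncountable lt Hwf Htri _ (fun x Hx => Hx) S HS).
  - intros z Sz. apply NNPP. intro. apply Hno. eauto.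
Qed.

Lemma connected_through_hubs {T : Type} (V H : T -> Prop) (E : T -> T -> Prop)
  (Esym : forall x y, E x y -> E y x)
  (Hne : exists v, V v)
  (Hhub : forall u, V u -> H u \/ exists h, V h /\ H h /\ E u h)
  (Hcommon : forall h1 h2, V h1 -> H h1 -> V h2 -> H h2 ->
               exists w, V w /\ E h1 w /\ E w h2) :
  connected_graph V E.
Proof.
  split; [exact Hne|].
  set (step := fun x y => V x /\ V y /\ E x y).
  assert (Hreach : forall u, V u -> exists h, V h /\ H h /\
            clos_refl_trans T step u h /\ clos_refl_trans T step h u).
  { intros u Hu. destruct (Hhub u Hu) as [Hh | [h [Vh [Hh Euh]]]].
    - exists u. repeat split; auto; apply rt_refl.
    - exists h. repeat split; auto; apply rt_step; unfold step; auto. }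
  intros u v Hu Hv.
  destruct (Hreach u Hu) as [h1 [V1 [H1 [Hu1 _]]]].
  destruct (Hreach v Hv) as [h2 [V2 [H2 [_ H2v]]]].
  destruct (Hcommon h1 h2 V1 H1 V2 H2) as [w [Vw [E1w Ew2]]].
  apply rt_trans with h1; [exact Hu1|].
  apply rt_trans with w; [apply rt_step; unfold step; auto|].
  apply rt_trans with h2; [apply rt_step; unfold step; auto | exact H2v].
Qed.

Theorem mainTheorem3
  (T : Type) (lt : T -> T -> Prop) (Homega2 : is_omega2 lt)
  (c : T -> T -> nat)
  (Hc_sym : forall x y, x <> y -> c x y = c y x)
  (k : nat) (A B : T -> Prop)
  (HA_sub : forall x, A x -> omega1_part lt x)
  (HA_card : equipotent A (omega1_part lt))
  (HB_sub : forall x, B x -> ~ omega1_part lt x)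
  (HB_card : equipotent B (omega1_part lt))
  (H1 : forall a0 a1, A a0 -> A a1 ->
          ~ countable (fun b => B b /\ c a0 b = k /\ c a1 b = k))
  (H2 : forall b0, B b0 ->
          ~ countable (fun a => A a /\ c a b0 = k)) :
  highly_connected (fun x => A x \/ B x)
    (fun x y => x <> y /\ c x y = k).
Proof.
  intros Y _ [_ HYsmall].
  assert (Hdisj : forall x, A x -> B x -> False)
    by (intros x Ha Hb; exact (HB_sub x Hb (HA_sub x Ha))).
  assert (Havoid : forall S, ~ countable S -> exists s, S s /\ ~ Y s)
    by (intros S HS; exact (small_set_misses_uncountable lt Homega2 A B Y S
                              (proj1 HA_card) (proj1 HB_card) HYsmall HS)).
  assert (HA_unc : ~ countable A)
    by (intro HcA; apply (omega1_part_uncountable lt Homega2);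
        exact (injects_trans _ _ _ (proj2 HA_card) HcA)).
  apply connected_through_hubs with (H := A).
  - intros x y [Hne Hxy]. split; [congruence | rewrite Hc_sym; auto].
  - destruct (Havoid A HA_unc) as [a [Ha HYa]]. exists a. tauto.
  -
    intros u [[Hu | Hu] HYu]; [now left | right].
    destruct (Havoid _ (H2 u Hu)) as [a [[Ha Hau] HYa]].
    assert (Hne : u <> a) by (intros ->; eauto).
    exists a. split; [tauto | split; [exact Ha | split; [exact Hne |]]].
    rewrite Hc_sym; auto.
  -
    intros a0 a1 _ Ha0 _ Ha1.
    destruct (Havoid _ (H1 a0 a1 Ha0 Ha1)) as [b [[Hb [Hb0 Hb1]] HYb]].
    assert (Hne0 : a0 <> b) by (intros ->; eauto).
    assert (Hne1 : b <> a1) by (intros <-; eauto).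
    exists b. split; [tauto | split; split; auto].
    rewrite Hc_sym; auto.
Qed.
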